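(* Let $\Gamma,T,\ast$ and $W$ be as in the context, and let $c$ be a cell of $\mathcal{UD}^n\Gamma$. Then: (1) $c$ is critical if and only if $c$ contains no order-respecting edge and all vertices of $c$ are blocked; (2) $c$ is redundant if and only if either (a) $c$ contains no order-respecting edge and at least one vertex of $c$ is unblocked, or (b) $c$ contains an order-respecting edge, and, with $e$ the minimal order-respecting edge of $c$, there is an unblocked vertex $v\in c$ with $v<\iota(e)$; (3) $c$ is collapsible if and only if $c$ contains an order-respecting edge and, with $e$ the minimal order-respecting edge of $c$, every vertex $v\in c$ with $v<\iota(e)$ is blocked.
   Context: $\Gamma$ is a finite connected graph and $n\ge1$; $d(v)$ is the degree of $v$, and $v$ is essential if $d(v)\ge3$. $\mathcal{UD}^n\Gamma$ is the cell complex whose cells are unordered $n$-element sets $c=\{c_1,\dots,c_n\}$ where each $c_i$ is a vertex or an edge of $\Gamma$ and the closed sets $c_i$ are pairwise disjoint (it is the quotient by the coordinate-permuting $S_n$-action of the subcomplex of $\Gamma^n$ formed by the product cells whose closures avoid the diagonal); the dimension of $c$ is the number of edges in it, and faces are obtained by replacing edges by endpoints. Fix a maximal tree $T$ of $\Gamma$ (edges not in $T$ are deleted edges) and a vertex $\ast$ of degree $1$ in $T$. For vertices $v_1,v_2$, $v_1\wedge v_2$ is the endpoint other than $\ast$ of $[\ast,v_1]\cap[\ast,v_2]$ (geodesics in $T$), or $\ast$ if this is $\{\ast\}$. Directions (edges) at each vertex $v$ are labelled $0,\dots,d(v)-1$, label $0$ for the edge of $T$ towards $\ast$ (the direction from $\ast$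 in $T$ gets label $1$); $g(v_1,v_2)$ is the label of the direction from $v_1$ on the $T$-geodesic to $v_2$, and $g(v,v)=0$. Order: $v_1\le v_2$ iff, with $v_3=v_1\wedge v_2$, $v_3=v_1$ or ($v_3\ne v_1$ and $g(v_3,v_1)<g(v_3,v_2)$); this is a linear order. For an edge $e$, $\iota(e)\ge\tau(e)$ are its endpoints; for $v\ne\ast$, $e(v)$ is the edge of $T$ at $v$ in direction $0$. Blocking and $W$: a vertex $v\neq\ast$ of a cell $c$ is unblocked in $c$ if $e(v)$ is disjoint from every element of $c$ other than $v$; then the elementary reduction of $c$ from $v$ is the cell obtained by replacing $v$ by $e(v)$. Otherwise (and always for $v=\ast$) $v$ is blocked. The principal reduction of $c$ is the elementary reduction from the smallest unblocked vertex of $c$ (if there is one). Define $W$: for a $0$-cell $c$, $W_0(c)$ is its principal reduction if it exists; for $i>0$ and an $i$-cell $c$, $W_i(c)$ is its principal reduction if this exists and $c\notin\mathrm{im}W_{i-1}$; otherwise undefined. A cell is redundant if it is in the domain of $W$, collapsible if it is in the image of $W$, and critical otherwise. An edge $e$ of a cell $c$ is order-respecting in $c$ if $e\subseteq T$ and for every vertex $v\in c$ with $v\neq\ast$, $e(v)\cap e=\{\tau(e)\}$ implies $v>\iota(e)$. If $c$ has order-respecting edges, the minimal one is the one with smallest $\iota(e)$. *)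

(* Graphs are finite multigraphs (loops allowed):
   vertex finType gV, edge finType gE, endpoint maps src/tgt. *)
From Stdlib Require Import ClassicalEpsilon.
From mathcomp Require Import all_boot.

(* Data: graph Gamma, set T of tree edges, base vertex star, and a
   labelling of directions: lab v e b is the label, at v, of the direction
   given by the end b of e (b = true: the src end, b = false: the tgt end). *)
Record gsetup := GSetup {
  gV : finType;
  gE : finType;
  src : gE -> gV;
  tgt : gE -> gV;
  gT : {set gE};
  star : gV;
  lab : gV -> gE -> bool -> nat }.

Section Defs.
Variable S : gsetup.
Local Notation V := (gV S).
Local Notation E := (gE S).

Definition endp (e : E) (b : bool) : V := if b then src S e else tgt S e.

Definition joins (e : E) (a x : V) : bool :=
  ((src S e == a) && (tgt S e == x)) || ((src S e == x) && (tgt S e == a)).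

(* a walk from a to b using edges satisfying P; each step (e, x) traverses
   e and arrives at x *)
Fixpoint walkin (P : pred E) (a b : V) (s : seq (E * V)) : bool :=
  match s with
  | [::] => a == b
  | (e, x) :: s' => P e && joins e a x && walkin P x b s'
  end.

Definition inT : pred E := fun e => e \in gT S.

Definition geod (a b : V) (s : seq (E * V)) : bool :=
  walkin inT a b s && uniq (a :: map snd s).

Definition gconnected : Prop := forall a b : V, exists s, walkin predT a b s.

Definition spanning_tree : Prop :=
  (forall a b : V, exists s, walkin inT a b s) /\
  ~ (exists (a : V) (s : seq (E * V)),
        [/\ s != [::], walkin inT a a s, uniq (map fst s) & uniq (map snd s)]).

Definition degT (v : V) : nat :=
  #|[set e in gT S | (src S e == v) || (tgt S e == v)]|.

(* degree = number of directions (half-edges) at v *)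
Definition deg (v : V) : nat :=
  #|[set e | src S e == v]| + #|[set e | tgt S e == v]|.

(* e is e(v): the first edge of the T-geodesic from v to star *)
Definition par_edge (v : V) (e : E) : Prop :=
  exists (x : V) (s : seq (E * V)), geod v (star S) ((e, x) :: s).

Definition labelling_ok : Prop :=
  [/\ (forall v e b, endp e b = v -> lab S v e b < deg v),
      (forall v e1 b1 e2 b2, endp e1 b1 = v -> endp e2 b2 = v ->
          lab S v e1 b1 = lab S v e2 b2 -> e1 = e2 /\ b1 = b2)
    & (forall v e, v <> star S -> par_edge v e -> lab S v e (src S e == v) = 0)].

Definition valid : Prop :=
  [/\ gconnected, spanning_tree, degT (star S) = 1 & labelling_ok].

Definition on_geod (a b x : V) : Prop :=
  exists s, geod a b s /\ x \in a :: map snd s.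

Definition is_meet (v1 v2 m : V) : Prop :=
  [/\ on_geod (star S) v1 m, on_geod (star S) v2 m &
      forall x, on_geod (star S) v1 x -> on_geod (star S) v2 x ->
        on_geod (star S) m x].

Definition gval (a b : V) (k : nat) : Prop :=
  (a = b /\ k = 0) \/
  exists (e : E) (x : V) (s : seq (E * V)),
    geod a b ((e, x) :: s) /\ k = lab S a e (src S e == a).

Definition vle (v1 v2 : V) : Prop :=
  exists m, is_meet v1 v2 m /\
    (m = v1 \/ (m <> v1 /\ exists k1 k2, [/\ gval m v1 k1, gval m v2 k2 & k1 < k2])).

Definition vlt (v1 v2 : V) : Prop := vle v1 v2 /\ v1 <> v2.

Definition iotaE (e : E) : V :=
  if excluded_middle_informative (vle (tgt S e) (src S e)) then src S e else tgt S e.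
Definition tauE (e : E) : V :=
  if excluded_middle_informative (vle (tgt S e) (src S e)) then tgt S e else src S e.

Definition endset (x : V + E) : {set V} :=
  match x with inl v => [set v] | inr e => [set src S e; tgt S e] end.

Definition cl_disj (x y : V + E) : bool := [disjoint endset x & endset y].

Definition is_cell (n : nat) (c : {set V + E}) : Prop :=
  #|c| = n /\ forall x y, x \in c -> y \in c -> x != y -> cl_disj x y.

Definition is_inr (x : V + E) : bool := if x is inr _ then true else false.

Definition dim (c : {set V + E}) : nat := #|[set x in c | is_inr x]|.

Definition unblocked (c : {set V + E}) (v : V) : Prop :=
  [/\ inl v \in c, v <> star S &
      exists e, par_edge v e /\
        forall x, x \in c -> x <> inl v -> cl_disj (inr e) x].

Definition blocked (c : {set V + E}) (v : V) : Prop :=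
  inl v \in c /\ ~ unblocked c v.

Definition elem_red (c : {set V + E}) (v : V) (c' : {set V + E}) : Prop :=
  unblocked c v /\ exists e, par_edge v e /\ c' = (c :\ inl v) :|: [set inr e].

Definition princ_red (c c' : {set V + E}) : Prop :=
  exists v, [/\ unblocked c v, (forall w, unblocked c w -> vle v w) & elem_red c v c'].

Fixpoint domW (n i : nat) (c : {set V + E}) : Prop :=
  [/\ dim c = i, (exists c', princ_red c c') &
      match i with
      | 0 => True
      | i'.+1 => ~ exists c0, [/\ is_cell n c0, domW n i' c0 & princ_red c0 c]
      end].

Definition redundant (n : nat) (c : {set V + E}) : Prop := domW n (dim c) c.

Definition collapsible (n : nat) (c : {set V + E}) : Prop :=
  exists c0, [/\ is_cell n c0, redundant n c0 & princ_red c0 c].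

Definition critical (n : nat) (c : {set V + E}) : Prop :=
  ~ redundant n c /\ ~ collapsible n c.

Definition ord_resp (c : {set V + E}) (e : E) : Prop :=
  [/\ inr e \in c, e \in gT S &
      forall v, inl v \in c -> v <> star S ->
        forall f, par_edge v f ->
          (f <> e /\ endset (inr f) :&: endset (inr e) = [set tauE e]) ->
          vlt (iotaE e) v].

Definition min_ord_resp (c : {set V + E}) (e : E) : Prop :=
  ord_resp c e /\ forall f, ord_resp c f -> vle (iotaE e) (iotaE f).

End Defs.

(* The order on vertices is the lexicographic order of the sequences of direction
   labels read along the T-geodesics from the base vertex; it is total, so every
   nonempty finite family of vertices has a least element.
   Call a cell R if it satisfies the right-hand side of (2) and C if it satisfies
   that of (3).  If c0 is R and c is obtained from c0 by the principal reduction at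
   its least unblocked vertex v0, then e(v0) is the minimal order-respecting edge
   of c and every vertex of c below v0 is blocked, so c is C.  Conversely, if c is C
   with minimal order-respecting edge e, replacing e by its endpoint iota(e) gives an
   R cell of one dimension less whose principal reduction is c.  Since R and C are
   exclusive and R amounts to "some vertex is unblocked and not C", induction on the
   dimension shows that the domain of W consists of the R cells and its image of the
   C cells; (1) follows because a cell with an order-respecting edge is R or C. *)

From Stdlib Require Import ClassicalEpsilon.
From mathcomp Require Import all_boot all_order.
Set Implicit Arguments. Unset Strict Implicit. Unset Printing Implicit Defensive.
Import Order.TTheory.

Lemma uniq_cat_rev_paths (T : eqType) (a y : T) l1 l2 :
  uniq (a :: rcons l1 y) -> uniq (a :: rcons l2 y) ->
  {in l1, forall z, z \notin l2} -> uniq (l1 ++ y :: rev (a :: l2)).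
Proof.
rewrite /= !rcons_uniq !mem_rcons !inE !negb_or.
move=> /and3P[/andP[ay a1] y1 U1] /and3P[/andP[_ a2] y2 U2] D.
rewrite cat_uniq U1 /= rev_uniq /= a2 U2 mem_rev inE negb_or y1.
rewrite [y == a]eq_sym (negbTE ay) (negbTE y2) andbT.
rewrite has_rev /= negb_or a1 andbT; apply/hasP=> -[z zl2 zl1].
by move: (D z zl1); rewrite zl2.
Qed.

Lemma has_split_first (T : Type) (p : pred T) s : has p s ->
  exists s1 x s2, [/\ s = rcons s1 x ++ s2, p x & ~~ has p s1].
Proof. by case/split_find=> x s1 s2 px np; exists s1, x, s2. Qed.

Lemma last_notin_nil (T : eqType) (x : T) s : x \notin s -> last x s = x -> s = [::].
Proof.
by case/lastP: s => // s y; rewrite last_rcons mem_rcons inE => /norP[/eqP + _] yx; rewrite yx.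
Qed.

Section Walks.
Variable S : gsetup.
Local Notation V := (gV S).
Local Notation E := (gE S).
Implicit Types (P : pred E) (a b x y v : V) (e f g : E) (s t : seq (E * V)).

Lemma joinsC e a x : joins S e a x = joins S e x a.
Proof. by rewrite /joins orbC. Qed.

Lemma joins_same_edge e a1 b1 a2 b2 : joins S e a1 b1 -> joins S e a2 b2 ->
  (a1 = a2 /\ b1 = b2) \/ (a1 = b2 /\ b1 = a2).
Proof.
by rewrite /joins => /orP[]/andP[/eqP<- /eqP<-] /orP[]/andP[/eqP-> /eqP->]; tauto.
Qed.

Lemma endset_joins e a b : joins S e a b -> endset S (inr e) = [set a; b].
Proof.
move=> j; apply/setP=> z; rewrite /= !inE.
by case/orP: j => /andP[/eqP-> /eqP->] //; rewrite orbC.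
Qed.

Lemma walkin_last P a b s : walkin S P a b s -> last a (map snd s) = b.
Proof. by elim: s a => [|[e x] s IH] a /=; [move/eqP | case/andP=> _ /IH]. Qed.

Lemma walkin_cat P a b s t :
  walkin S P a b (s ++ t) =
  walkin S P a (last a (map snd s)) s && walkin S P (last a (map snd s)) b t.
Proof. by elim: s a => [|[e x] s IH] a /=; rewrite ?eqxx // IH !andbA. Qed.

Fixpoint rev_walk a s : seq (E * V) :=
  if s is (e, x) :: t then rev_walk x t ++ [:: (e, a)] else [::].

Lemma walkin_rev P a b s : walkin S P a b s -> walkin S P b a (rev_walk a s).
Proof.
elim: s a => [|[e x] s IH] a /=; first by move/eqP->.
case/andP=> /andP[Pe j] W.
by rewrite walkin_cat (walkin_last (IH _ W)) IH //= Pe joinsC j eqxx.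
Qed.

Lemma map_snd_rev_walk a s :
  last a (map snd s) :: map snd (rev_walk a s) = rev (a :: map snd s).
Proof.
elim: s a => [|[e x] s IH] a //=.
by rewrite map_cat -cat_cons IH [in RHS]rev_cons cats1.
Qed.

Lemma size_rev_walk a s : size (rev_walk a s) = size s.
Proof. by elim: s a => [|[e x] s IH] a //=; rewrite size_cat IH addn1. Qed.

Lemma rev_walk_cat a s t :
  rev_walk a (s ++ t) = rev_walk (last a (map snd s)) t ++ rev_walk a s.
Proof. by elim: s a => [|[e x] s IH] a /=; rewrite ?cats0 // IH catA. Qed.

Lemma walkin_last_mem P a b st s : walkin S P a b (st :: s) -> b \in map snd (st :: s).
Proof. by move/walkin_last <-; case: st => e x /=; apply: mem_last. Qed.

Lemma geod_nil a b : geod S a b [::] -> a = b.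
Proof. by case/andP=> /eqP. Qed.

Lemma geod_loop a s : geod S a a s -> s = [::].
Proof.
case: s => [|[e x] t] // /andP[W].
by rewrite -{1}(walkin_last W) /= mem_last.
Qed.

Lemma geod_rev a b s : geod S a b s -> geod S b a (rev_walk a s).
Proof.
case/andP=> W U; rewrite /geod walkin_rev //=.
by rewrite -[_ && _]/(uniq (b :: _)) -(walkin_last W) map_snd_rev_walk rev_uniq.
Qed.

Lemma geod_cat a b s t : geod S a b (s ++ t) ->
  geod S a (last a (map snd s)) s /\ geod S (last a (map snd s)) b t.
Proof.
case/andP; rewrite walkin_cat map_cat -cat_cons cat_uniq => /andP[W1 W2] /and3P[U1 H U2].
split; first by rewrite /geod W1 U1.
rewrite /geod W2 /= U2 andbT; apply: contra H => lt.
by apply/hasP; exists (last a (map snd s)) => //; apply: mem_last.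
Qed.

Lemma walkin_edge_endset P a b s g v : walkin S P a b s -> g \in map fst s ->
  v \in endset S (inr g) -> v \in a :: map snd s.
Proof.
elim: s a => [//|[e x] s IH] a /andP[/andP[_ j] W].
rewrite map_cons inE => /orP[/eqP-> | gs] vg.
  by move: vg; rewrite (endset_joins j) !inE => /orP[]->; rewrite ?orbT.
by rewrite inE (IH _ W gs vg) orbT.
Qed.

Lemma path_uniq_edges P a b s : walkin S P a b s -> uniq (a :: map snd s) ->
  uniq (map fst s).
Proof.
elim: s a => [|[e x] s IH] a //= /andP[/andP[_ j] W] /andP[na U].
rewrite (IH _ W U) andbT; apply: contra na => es.
have ae : a \in endset S (inr e) by rewrite (endset_joins j) !inE eqxx.
exact: walkin_edge_endset W es ae.
Qed.

Lemma closed_walk_uniq_edges P a C : walkin S P a a C -> uniq (map snd C) ->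
  2 < size C -> uniq (map fst C).
Proof.
case/lastP: C => [//|C [g w]].
rewrite -cats1 walkin_cat !map_cat !cat_uniq /= !andbT !orbF size_cat addn1 ltnS.
move=> /andP[W /andP[/andP[_ jg] /eqP wa]] /andP[UC aC] sz; subst w.
have GC : uniq (a :: map snd C) by rewrite /= aC.
rewrite (path_uniq_edges W GC) /=; apply/negP => gC.
have : has (fun st => st.1 == g) C by case/mapP: gC => st stC ->; apply/hasP; exists st.
case/has_split_first=> p [[g' y] [q [eC /eqP /= eg _]]]; subst C g' => {GC gC}.
move: W aC UC sz jg.
rewrite walkin_cat -cats1 walkin_cat => /andP[/andP[_ /= /andP[/andP[_ jy] _]] _].
rewrite cats1 !map_cat map_rcons mem_cat mem_rcons !inE !negb_or cat_uniq rcons_uniq.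
move=> /andP[/andP[ay ap] _] /and3P[/andP[yp _] yq _].
rewrite size_cat size_rcons last_cat last_rcons /= => sz jg.
case: (joins_same_edge jy jg) => -[zl yl]; first by rewrite yl eqxx in ay.
have yq' : y \notin map snd q.
  by apply: contra yq => yq; apply/hasP; exists y; rewrite ?mem_rcons ?mem_head.
have /(congr1 size) := last_notin_nil ap zl.
have /(congr1 size) := last_notin_nil yq' (esym yl).
by rewrite !size_map => q0 p0; rewrite p0 q0 in sz.
Qed.

Lemma walkin_geod P a b s : walkin S P a b s ->
  exists2 t, walkin S P a b t & uniq (a :: map snd t).
Proof.
elim: s a => [|[e x] s IH] a /=; first by exists [::].
case/andP=> /andP[Pe j] /IH[t Wt Ut].
have [ain | aNin] := boolP (a \in x :: map snd t); last first.
  by exists ((e, x) :: t); rewrite /= ?Pe ?j ?Wt ?aNin.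
move: ain; rewrite inE => /orP[/eqP-> | ain]; first by exists t.
have /has_split_first[p [[f y] [q [et /eqP /= ya _]]]] : has (fun st => st.2 == a) t.
  by case/mapP: ain => st stt ->; apply/hasP; exists st.
subst t y; move: Wt Ut; rewrite walkin_cat map_cat map_rcons last_rcons => /andP[_ Wq].
by rewrite -cats1 -catA -cat_cons cat_uniq => /and3P[_ _]; exists q.
Qed.

End Walks.

Section Tree.
Variable S : gsetup.
Hypothesis HT : spanning_tree S.
Local Notation V := (gV S).
Local Notation E := (gE S).
Implicit Types (a b x y : V) (e f g : E) (s t : seq (E * V)).

Lemma tree_acyclic a C : walkin S (inT S) a a C -> C != [::] ->
  uniq (map fst C) -> uniq (map snd C) -> False.
Proof. by move=> W N U1 U2; case: HT => _; apply; exists a, C. Qed.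

Lemma tree_branching_paths a y p1 p2 f g :
  geod S a y (rcons p1 (f, y)) -> geod S a y (rcons p2 (g, y)) ->
  {in map snd p1, forall z, z \notin map snd p2} ->
  rcons p1 (f, y) != rcons p2 (g, y) -> False.
Proof.
move=> /andP[W1 +] /andP[W2 +]; rewrite !map_rcons => U1 U2 D neq.
set C := rcons p1 (f, y) ++ rev_walk a (rcons p2 (g, y)).
have WC : walkin S (inT S) a a C.
  by rewrite walkin_cat map_rcons last_rcons W1 walkin_rev.
have UC : uniq (map snd C).
  rewrite /C map_cat map_rcons cat_rcons.
  have := map_snd_rev_walk a (rcons p2 (g, y)).
  rewrite map_rcons last_rcons -rcons_cons rev_rcons => -[->].
  exact: uniq_cat_rev_paths U1 U2 D.
have szC : size C = (size p1 + size p2).+2.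
  by rewrite size_cat size_rev_walk !size_rcons addnS addSn.
apply: (tree_acyclic WC _ _ UC); first by rewrite -size_eq0 szC.
case: (posnP (size p1 + size p2)) => [/eqP | pos].
  rewrite addn_eq0 !size_eq0 => /andP[/eqP p10 /eqP p20]; subst p1 p2.
  by rewrite /C /= inE andbT; apply: contra neq => /eqP->.
by apply: closed_walk_uniq_edges WC UC _; rewrite szC.
Qed.

Lemma geod_head_uniq a b st1 st2 t1 t2 :
  geod S a b (st1 :: t1) -> geod S a b (st2 :: t2) -> st1 = st2.
Proof.
move=> G1 G2; apply/eqP; apply: contraT => ne12.
have : has (fun st => st.2 \in map snd (st2 :: t2)) (st1 :: t1).
  have /mapP[st stin bst] := walkin_last_mem (proj1 (andP G1)).
  by apply/hasP; exists st; rewrite -?bst ?(walkin_last_mem (proj1 (andP G2))).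
case/has_split_first=> p1 [[f y] [q1 [E1 ys2 nh]]].
have /has_split_first[p2 [[g y'] [q2 [E2 /eqP /= yy _]]]] :
    has (fun st => st.2 == y) (st2 :: t2).
  by case/mapP: ys2 => st sts yst; apply/hasP; exists st; rewrite -?yst.
subst y'; rewrite E1 in G1; rewrite E2 in G2.
have [P1 _] := geod_cat G1; have [P2 _] := geod_cat G2.
rewrite map_rcons last_rcons in P1; rewrite map_rcons last_rcons in P2.
case: (tree_branching_paths P1 P2).
  move=> z /mapP[st stp ->]; apply: contra nh => zp2; apply/hasP; exists st => //.
  by rewrite E2 map_cat map_rcons mem_cat mem_rcons inE zp2 orbT.
apply: contra ne12 => /eqP r12; move: E1 E2; rewrite r12 headI /=.
by move=> [-> _] [-> _].
Qed.

Lemma geod_uniq a b s1 s2 : geod S a b s1 -> geod S a b s2 -> s1 = s2.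
Proof.
elim: s1 a s2 => [|st1 t1 IH] a s2 G1 G2.
  by move: G2; rewrite -(geod_nil G1) => /geod_loop.
case: s2 G2 => [G2 | st2 t2 G2]; first by move: G1; rewrite -(geod_nil G2) => /geod_loop.
have e12 := geod_head_uniq G1 G2; subst st2.
have [_ G1'] := geod_cat (s := [:: st1]) G1; have [_ G2'] := geod_cat (s := [:: st1]) G2.
by rewrite (IH _ _ G1' G2').
Qed.
End Tree.

Lemma cat_eq_prefix (T : Type) (s1 r1 s2 r2 : seq T) : s1 ++ r1 = s2 ++ r2 ->
  (exists u, s1 = s2 ++ u) \/ (exists u, s2 = s1 ++ u).
Proof.
elim: s1 s2 => [|x s1 IH] [|y s2] /=; try by [right; exists (y :: s2) | left; eexists].
by case=> -> /IH[[u ->] | [u ->]]; [left | right]; exists u.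
Qed.

Lemma lexi_catl (p s t : seq nat) :
  (p ++ s <= p ++ t :> seqlexi nat)%O = (s <= t :> seqlexi nat)%O.
Proof. by elim: p => //= x p IH; rewrite eqhead_lexiE. Qed.

Section VertexOrder.
Variable S : gsetup.
Hypothesis HT : spanning_tree S.
Hypothesis HL : labelling_ok S.
Local Notation V := (gV S).
Local Notation E := (gE S).
Local Notation star := (star S).
Implicit Types (a b m x y v : V) (e f : E) (r s : seq (E * V)).

Lemma geod_exists a b : exists s, geod S a b s.
Proof.
by case: HT => conn _; have [s /walkin_geod[t W U]] := conn a b; exists t; apply/andP.
Qed.

Definition root_path v : seq (E * V) := xchoose (geod_exists star v).

Lemma root_path_geod v : geod S star v (root_path v).
Proof. exact: xchooseP. Qed.

Lemma root_pathE v s : geod S star v s -> s = root_path v.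
Proof. by move=> G; exact: (geod_uniq HT G (root_path_geod v)). Qed.

Lemma root_path_last v : last star (map snd (root_path v)) = v.
Proof. by case/andP: (root_path_geod v) => /walkin_last. Qed.

Lemma root_path_star : root_path star = [::].
Proof. exact: geod_loop (root_path_geod star). Qed.

Lemma root_path_inj : injective root_path.
Proof. by move=> x y exy; rewrite -(root_path_last x) exy root_path_last. Qed.

Lemma root_path_cat_geod x v r : root_path v = root_path x ++ r -> geod S x v r.
Proof.
by move=> e; have := root_path_geod v; rewrite e => /geod_cat[_]; rewrite root_path_last.
Qed.

Definition anc v : seq V := star :: map snd (root_path v).

Lemma anc_self v : v \in anc v.
Proof. by rewrite /anc -{1}(root_path_last v) mem_last. Qed.

Lemma ancP x v : reflect (exists r, root_path v = root_path x ++ r) (x \in anc v).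
Proof.
apply: (iffP idP) => [|[r e]]; last first.
  by rewrite /anc e map_cat -cat_cons mem_cat -{1}(root_path_last x) mem_last.
rewrite inE => /orP[/eqP-> | xv]; first by exists (root_path v); rewrite root_path_star.
have /has_split_first[p [[f y] [q [e /eqP /= yx _]]]] :
    has (fun st => st.2 == x) (root_path v).
  by case/mapP: xv => st stv ->; apply/hasP; exists st.
subst y; exists q; have := root_path_geod v; rewrite e => /geod_cat[+ _].
by rewrite map_rcons last_rcons => /root_pathE <-.
Qed.

Lemma on_geod_anc v x : on_geod S star v x <-> x \in anc v.
Proof.
split=> [[s [/root_pathE-> //]] | xv].
by exists (root_path v); rewrite root_path_geod.
Qed.

Fixpoint labs a s : seq nat :=
  if s is (e, x) :: t then lab S a e (src S e == a) :: labs x t else [::].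

Lemma labs_cat a s t : labs a (s ++ t) = labs a s ++ labs (last a (map snd s)) t.
Proof. by elim: s a => [|[e x] s IH] a //=; rewrite IH. Qed.

Lemma size_labs a s : size (labs a s) = size s.
Proof. by elim: s a => [|[e x] s IH] a //=; rewrite IH. Qed.

(* By [vle_key], the vertex order compares these sequences lexicographically. *)
Definition key v : seqlexi nat := labs star (root_path v).

Lemma key_cat x v r : root_path v = root_path x ++ r -> key v = key x ++ labs x r.
Proof. by move=> e; rewrite /key e labs_cat root_path_last. Qed.

Lemma meet_exists v1 v2 : exists2 m, (m \in anc v1) && (m \in anc v2) &
  forall x, x \in anc v1 -> x \in anc v2 -> x \in anc m.
Proof.
have star12 : (star \in anc v1) && (star \in anc v2) by rewrite !mem_head.
case: (arg_maxnP (fun x => size (root_path x))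
  (P := fun x => (x \in anc v1) && (x \in anc v2)) star12) => m m12 mmax.
exists m => // x x1 x2.
have /ancP[r1 e1] := proj1 (andP m12); have /ancP[r e] := x1.
case: (cat_eq_prefix (etrans (esym e1) e)) => [[d ed] | [d ed]].
  by apply/ancP; exists d.
have := mmax x; rewrite x1 x2 ed size_cat => /(_ isT) /=.
rewrite -[X in _ <= X]addn0 leq_add2l leqn0 size_eq0 => /eqP d0.
by move: ed; rewrite d0 cats0 => /root_path_inj->; apply: anc_self.
Qed.

Lemma joins_endp e a x : joins S e a x -> endp S e (src S e == a) = a.
Proof. by rewrite /endp /joins; case: (eqVneq (src S e) a) => //= _ /andP[_ /eqP]. Qed.

Lemma meet_branch v1 v2 : exists m r1 r2, [/\ is_meet S v1 v2 m,
    root_path v1 = root_path m ++ r1, root_path v2 = root_path m ++ r2 &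
    [\/ r1 = [::], r2 = [::] |
        exists e1 x1 t1 e2 x2 t2, [/\ r1 = (e1, x1) :: t1, r2 = (e2, x2) :: t2 &
          lab S m e1 (src S e1 == m) != lab S m e2 (src S e2 == m)]]].
Proof.
have [m /andP[m1 m2] mmax] := meet_exists v1 v2.
have /ancP[r1 e1] := m1; have /ancP[r2 e2] := m2.
exists m, r1, r2; split=> //.
  split; try exact/on_geod_anc.
  by move=> x /on_geod_anc x1 /on_geod_anc x2; apply/on_geod_anc/mmax.
case: r1 e1 => [|[f1 x1] t1] e1; first by constructor 1.
case: r2 e2 => [|[f2 x2] t2] e2; first by constructor 2.
constructor 3; exists f1, x1, t1, f2, x2, t2; split=> //; apply/eqP => el.
have /andP[/= /andP[/andP[_ J1] _] /andP[mx1 _]] := root_path_cat_geod e1.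
have /andP[/= /andP[/andP[_ J2] _] _] := root_path_cat_geod e2.
case: HL => _ lab_inj _.
have [ef _] := lab_inj m f1 _ f2 _ (joins_endp J1) (joins_endp J2) el; subst f2.
have ex : x1 = x2.
  by case: (joins_same_edge J1 J2) => [[_ //] | [_ x1m]]; rewrite x1m mem_head in mx1.
subst x2.
have px1 : root_path x1 = rcons (root_path m) (f1, x1).
  have := root_path_geod v1; rewrite e1 -cat_rcons => /geod_cat[+ _].
  by rewrite map_rcons last_rcons => /root_pathE.
have x1v : forall v t, root_path v = root_path m ++ (f1, x1) :: t -> x1 \in anc v.
  by move=> v t e; apply/ancP; exists t; rewrite px1 cat_rcons.
have /ancP[u] := mmax _ (x1v _ _ e1) (x1v _ _ e2).
by rewrite px1 -cats1 -catA => /(congr1 size); rewrite size_cat -{1}[size _]addn0 => /addnI.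
Qed.

Lemma vle_key v1 v2 : vle S v1 v2 <-> (key v1 <= key v2)%O.
Proof.
split.
  case=> m [[/on_geod_anc /ancP[r1 e1] /on_geod_anc /ancP[r2 e2] _] H].
  have G1 := root_path_cat_geod e1; have G2 := root_path_cat_geod e2.
  rewrite (key_cat e1) (key_cat e2) lexi_catl.
  case: H => [mv | [mv [k1 [k2 [gv1 gv2 k12]]]]].
    by move: G1; rewrite mv => /geod_loop->.
  case: gv1 => [[/mv //] | [f [x [s [Gs ek1]]]]].
  case: gv2 => [[_ k0] | [f' [x' [s' [Gs' ek2]]]]]; first by rewrite k0 in k12.
  rewrite (geod_uniq HT G1 Gs) (geod_uniq HT G2 Gs') /= -ek1 -ek2.
  by rewrite neqhead_lexiE ?ltn_eqF.
have [m [r1 [r2 [Mm e1 e2 C]]]] := meet_branch v1 v2.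
rewrite (key_cat e1) (key_cat e2) lexi_catl.
have G1 := root_path_cat_geod e1; have G2 := root_path_cat_geod e2.
case: C => [r0 | r0 | [f1 [x1 [t1 [f2 [x2 [t2 [er1 er2 nl]]]]]]]]; subst.
- by move=> _; exists m; split=> //; left; apply: geod_nil.
- rewrite lexis0; case: r1 {e1} G1 => [/geod_nil mv _ | [e x] r _] //.
  by exists m; split=> //; left.
rewrite /= neqhead_lexiE // => lt12; exists m; split=> //; right; split.
  by move=> mv; subst m; move: (geod_loop G1).
exists (lab S m f1 (src S f1 == m)), (lab S m f2 (src S f2 == m)).
by split=> //; right; [exists f1, x1, t1 | exists f2, x2, t2].
Qed.

Lemma key_inj : injective key.
Proof.
move=> v1 v2; have [m [r1 [r2 [_ e1 e2 C]]]] := meet_branch v1 v2.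
have G1 := root_path_cat_geod e1; have G2 := root_path_cat_geod e2.
rewrite (key_cat e1) (key_cat e2) => /(congr1 (drop (size (key m)))).
rewrite !drop_size_cat //.
case: C => [r0 | r0 | [f1 [x1 [t1 [f2 [x2 [t2 [-> -> nl]]]]]]]];
  last by case=> el; rewrite el eqxx in nl.
all: subst; move/(congr1 size); rewrite !size_labs /= => /eqP.
all: rewrite ?[0 == _]eq_sym size_eq0 => /eqP r0.
all: by subst; rewrite -(geod_nil G1) (geod_nil G2).
Qed.

Lemma vle_trans u v w : vle S u v -> vle S v w -> vle S u w.
Proof. by move=> /vle_key uv /vle_key vw; apply/vle_key/(le_trans uv vw). Qed.

Lemma vle_anti u v : vle S u v -> vle S v u -> u = v.
Proof. by move=> /vle_key uv /vle_key vu; apply/key_inj/le_anti; rewrite uv vu. Qed.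

Lemma vle_or_vlt u v : vle S u v \/ vlt S v u.
Proof.
have [uv | vu] := leP (key u) (key v); first by left; apply/vle_key.
by right; split; [apply/vle_key/ltW | move=> evu; rewrite evu ltxx in vu].
Qed.

Lemma vlt_nvle u v : vlt S u v -> ~ vle S v u.
Proof. by case=> uv nuv vu; apply/nuv/vle_anti. Qed.

Lemma vle_min (I : finType) (f : I -> V) (P : I -> Prop) :
  (exists i, P i) -> exists i, P i /\ forall j, P j -> vle S (f i) (f j).
Proof.
pose Pb i := if excluded_middle_informative (P i) then true else false.
have PbP i : Pb i <-> P i by rewrite /Pb; case: excluded_middle_informative.
case=> i0 /PbP Pi0; case: (arg_minP (fun i => key (f i)) Pi0) => i /PbP Pi imin.
by exists i; split=> // j /PbP Pj; apply/vle_key/imin.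
Qed.
End VertexOrder.

Section TreeEdges.
Variable S : gsetup.
Hypothesis HT : spanning_tree S.
Hypothesis HL : labelling_ok S.
Local Notation V := (gV S).
Local Notation E := (gE S).
Local Notation star := (star S).
Local Notation root_path := (root_path HT).
Implicit Types (p c v : V) (e : E).

Lemma par_edgeP v e :
  par_edge S v e <-> exists p, root_path v = rcons (root_path p) (e, v).
Proof.
split=> [[x [s G]] | [p pv]].
  have /geod_cat[Gp _] := geod_rev G; exists (last star (map snd (rev_walk x s))).
  by rewrite -(root_pathE HT (geod_rev G)) -cats1 -(root_pathE HT Gp).
exists p, (rev_walk star (root_path p)).
by have := geod_rev (root_path_geod HT v); rewrite pv -cats1 rev_walk_cat root_path_last.
Qed.

Section Child.
Variables (p c : V) (e : E).
Hypothesis pc : root_path c = rcons (root_path p) (e, c).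

Lemma child_geod : geod S p c [:: (e, c)].
Proof. by apply: root_path_cat_geod; rewrite pc cats1. Qed.

Lemma child_joins : joins S e p c.
Proof. by case/andP: child_geod => /= /andP[/andP[]]. Qed.

Lemma child_in_tree : e \in gT S.
Proof. by case/andP: child_geod => /= /andP[/andP[]]. Qed.

Lemma child_neq : p <> c.
Proof. by case/andP: child_geod => _ /=; rewrite inE => /andP[/eqP]. Qed.

Lemma child_neq_star : c <> star.
Proof.
move=> cs; have /andP[_] := root_path_geod HT c.
by rewrite pc map_rcons -rcons_cons rcons_uniq cs mem_head.
Qed.

Lemma child_vlt : vlt S p c.
Proof.
split; last exact: child_neq.
have pc' : root_path c = root_path p ++ [:: (e, c)] by rewrite pc cats1.
by apply/(vle_key HT HL); rewrite (key_cat pc') -[X in (X <= _)%O]cats0 lexi_catl.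
Qed.

Lemma child_iota : iotaE S e = c /\ tauE S e = p.
Proof.
have [pc_le _] := child_vlt.
rewrite /iotaE /tauE; case: excluded_middle_informative => h;
  case/orP: child_joins => /andP[/eqP sp /eqP tc]; rewrite sp tc in h * => //.
by case: child_neq; apply: (vle_anti HT HL pc_le h).
Qed.

End Child.

Lemma par_edge_uniq v e e' : par_edge S v e -> par_edge S v e' -> e = e'.
Proof.
case/par_edgeP=> p pv /par_edgeP[p'].
by rewrite pv => /rcons_inj[_ ->].
Qed.

Lemma par_edge_joins v e : par_edge S v e -> exists p, joins S e p v.
Proof. by case/par_edgeP=> p pv; exists p; apply: child_joins pv. Qed.

Lemma tree_edge_child e : e \in gT S ->
  exists p c, root_path c = rcons (root_path p) (e, c).
Proof.
move=> eT.
have st : src S e != tgt S e.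
  apply/eqP=> st; apply: (@tree_acyclic _ HT (src S e) [:: (e, src S e)]) => //=.
  by rewrite /inT eT /joins st !eqxx.
have [ta | tNa] := boolP (tgt S e \in anc HT (src S e)).
  have /ancP[r e_r] := ta.
  have Gte : geod S (tgt S e) (src S e) [:: (e, src S e)].
    by rewrite /geod /= /inT eT /joins !eqxx orbT inE eq_sym st.
  exists (tgt S e), (src S e).
  by rewrite e_r (geod_uniq HT (root_path_cat_geod e_r) Gte) cats1.
exists (src S e), (tgt S e); symmetry; apply: root_pathE.
have /andP[W U] := root_path_geod HT (src S e).
rewrite /geod -cats1 walkin_cat root_path_last W /= /inT eT /joins !eqxx /=.
by rewrite -[_ && _]/(uniq (star :: _)) map_cat cats1 -rcons_cons rcons_uniq tNa.
Qed.

End TreeEdges.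

Section Cells.
Variable S : gsetup.
Hypothesis HT : spanning_tree S.
Hypothesis HL : labelling_ok S.
Local Notation V := (gV S).
Local Notation E := (gE S).
Local Notation star := (star S).
Implicit Types (c : {set V + E}) (u v w : V) (e f g : E) (x y : V + E).

Lemma cl_disjC x y : cl_disj S x y = cl_disj S y x.
Proof. exact: disjoint_sym. Qed.

Lemma cl_disjP x y :
  reflect (forall z, z \in endset S x -> z \notin endset S y) (cl_disj S x y).
Proof.
apply: (iffP idP) => [D z zx | H]; first by rewrite (disjointFr D zx).
by rewrite /cl_disj disjoint_subset; apply/subsetP => z /H.
Qed.

Lemma cl_disj_vertex v x : cl_disj S (inl v) x = (v \notin endset S x).
Proof. exact: disjoints1. Qed.

Lemma cl_disj_edge f a b x : joins S f a b ->
  cl_disj S (inr f) x = (a \notin endset S x) && (b \notin endset S x).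
Proof.
move=> j; apply/idP/andP => [/cl_disjP D | [aN bN]].
  by split; apply: D; rewrite (endset_joins j) !inE eqxx ?orbT.
by apply/cl_disjP => z; rewrite (endset_joins j) !inE => /orP[]/eqP->.
Qed.

Lemma iota_endset e : iotaE S e \in endset S (inr e).
Proof.
by rewrite /iotaE; destruct excluded_middle_informative; rewrite /= !inE eqxx ?orbT.
Qed.

Lemma unblockedP c v g : par_edge S v g -> unblocked S c v <->
  [/\ inl v \in c, v <> star & forall x, x \in c -> x <> inl v -> cl_disj S (inr g) x].
Proof.
move=> pg; split=> [[vc vs [g' [pg' D]]] | [vc vs D]]; last by split=> //; exists g.
by rewrite (par_edge_uniq HT pg pg') in D *.
Qed.

Definition redundant_cond c :=
  (~ (exists e, ord_resp S c e) /\ exists v, inl v \in c /\ unblocked S c v) \/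
  (exists e, min_ord_resp S c e /\
     exists v, [/\ inl v \in c, unblocked S c v & vlt S v (iotaE S e)]).

Definition collapsible_cond c :=
  exists e, min_ord_resp S c e /\
    forall v, inl v \in c -> vlt S v (iotaE S e) -> blocked S c v.

Section Reduction.
Variables (n : nat) (c0 : {set V + E}) (p v0 : V) (e : E).
Hypothesis cell0 : is_cell S n c0.
(* e = e(v0), and p = tau(e) is the parent of v0 *)
Hypothesis pv0 : root_path HT v0 = rcons (root_path HT p) (e, v0).
Hypothesis U0 : unblocked S c0 v0.
Hypothesis min0 : forall w, unblocked S c0 w -> vle S v0 w.

Let c := c0 :\ inl v0 :|: [set inr e].
Let pe : par_edge S v0 e := proj2 (par_edgeP HT v0 e) (ex_intro _ p pv0).
Let jpe : joins S e p v0 := child_joins pv0.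
Let D0 : forall x, x \in c0 -> x <> inl v0 -> cl_disj S (inr e) x.
Proof. by case/(unblockedP _ pe): U0. Qed.

Lemma mem_reduced x : (x \in c) = ((x != inl v0) && (x \in c0)) || (x == inr e).
Proof. by rewrite !inE. Qed.

Lemma reduced_vertex v : inl v \in c -> v <> v0 /\ inl v \in c0.
Proof.
by rewrite mem_reduced orbF => /andP[/eqP vv0 ->]; split=> // v_v0; rewrite v_v0 in vv0.
Qed.

Lemma ord_resp_reduced : ord_resp S c e.
Proof.
have [iota_e tau_e] := child_iota HL pv0.
split; [by rewrite mem_reduced eqxx orbT | exact: child_in_tree pv0 |].
move=> v /reduced_vertex[vv0 vc0] vs f pf [fe fe_int]; rewrite iota_e.
case: (vle_or_vlt HT HL v0 v) => [le_v0v | lt_vv0]; first by split=> // /esym.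
(* e(v) meets e(v0) only in p, so v < v0 would be unblocked already in c0 *)
exfalso; apply: (vlt_nvle HT HL lt_vv0); apply: min0; apply/(unblockedP _ pf).
split=> // x xc0 xv.
have [q jf] := par_edge_joins HT pf.
have ve : v \notin endset S (inr e).
  by rewrite -cl_disj_vertex cl_disjC D0 // => -[].
have qp : q = p.
  have : p \in endset S (inr f) :&: endset S (inr e) by rewrite fe_int -tau_e set11.
  rewrite inE (endset_joins jf) !inE => /andP[/orP[/eqP // | /eqP pv] _].
  by rewrite -pv (endset_joins jpe) !inE eqxx in ve.
rewrite (cl_disj_edge _ jf) qp; apply/andP; split; last first.
  by rewrite -cl_disj_vertex; case: cell0 => _; apply=> //; apply/eqP => /esym /xv.
have [-> | xv0] := eqVneq x (inl v0).
  by rewrite !inE; apply/eqP => pv0'; apply: (child_neq pv0).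
by move: (D0 xc0 (elimN eqP xv0)); rewrite (cl_disj_edge _ jpe) => /andP[].
Qed.

Lemma reduced_blocked_below w : inl w \in c -> vlt S w v0 -> blocked S c w.
Proof.
move=> wc lt_wv0; split=> // -[_ ws [g [pg Dg]]].
have [_ wc0] := reduced_vertex wc.
apply: (vlt_nvle HT HL lt_wv0); apply: min0; apply/(unblockedP _ pg).
split=> // x xc0 xw; have [-> | xv0] := eqVneq x (inl v0); last first.
  by apply: Dg => //; rewrite mem_reduced xv0 xc0.
have : cl_disj S (inr g) (inr e) by apply: Dg => //; rewrite mem_reduced eqxx orbT.
by rewrite cl_disjC (cl_disj_edge _ jpe) cl_disjC cl_disj_vertex => /andP[].
Qed.

Lemma ord_resp_reduced_ge f :
  redundant_cond c0 -> ord_resp S c f -> vle S v0 (iotaE S f).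
Proof.
move=> R [fc fT Hf]; case: (vle_or_vlt HT HL v0 (iotaE S f)) => // lt_fv0.
have fe : f != e.
  by apply: contraPneq lt_fv0 => ->; rewrite (child_iota HL pv0).1 => -[_].
have orf0 : ord_resp S c0 f.
  split=> //.
    by move: fc; rewrite mem_reduced (inj_eq (@inr_inj _ _)) (negbTE fe) orbF => /andP[].
  move=> v vc0 vs g pg H; have [-> // | vv0] := eqVneq v v0.
  by apply: Hf vs g pg H; rewrite mem_reduced vc0 (inj_eq (@inl_inj _ _)) vv0.
case: R => [[nor _] | [e0 [[_ min_e0] [v [_ Uv lt_v]]]]]; first by case: nor; exists f.
case: (vlt_nvle HT HL lt_fv0).
exact: vle_trans (min0 Uv) (vle_trans HT HL (proj1 lt_v) (min_e0 _ orf0)).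
Qed.

Lemma reduced_collapsible_cond : redundant_cond c0 -> collapsible_cond c.
Proof.
move=> R; have [iota_e _] := child_iota HL pv0.
exists e; split; first split.
- exact: ord_resp_reduced.
- by move=> f; rewrite iota_e; apply: ord_resp_reduced_ge.
by move=> w wc; rewrite iota_e; apply: reduced_blocked_below.
Qed.

End Reduction.

Lemma princ_red_collapsible_cond n c0 c :
  is_cell S n c0 -> redundant_cond c0 -> princ_red S c0 c -> collapsible_cond c.
Proof.
move=> cell0 R [v0 [U0 min0 [_ [e [pe ->]]]]].
have [p pv0] := proj1 (par_edgeP HT v0 e) pe.
exact: reduced_collapsible_cond cell0 pv0 U0 min0 R.
Qed.

Section Expansion.
Variables (n : nat) (c : {set V + E}) (p u : V) (e : E).
Hypothesis cell : is_cell S n c.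
(* u = iota(e) is the child endpoint of the tree edge e *)
Hypothesis pu : root_path HT u = rcons (root_path HT p) (e, u).
Hypothesis ore : ord_resp S c e.
Hypothesis min_e : forall f, ord_resp S c f -> vle S u (iotaE S f).
Hypothesis blocked_below : forall v, inl v \in c -> vlt S v u -> blocked S c v.

Let c0 := inl u |: (c :\ inr e).
Let pe : par_edge S u e := proj2 (par_edgeP HT u e) (ex_intro _ p pu).
Let jpu : joins S e p u := child_joins pu.
Let ec : inr e \in c. Proof. by case: ore. Qed.
Let De x : x \in c -> x != inr e -> cl_disj S (inr e) x.
Proof. by move=> xc xe; case: cell => _; apply=> //; rewrite eq_sym. Qed.

Lemma mem_expanded x : (x \in c0) = (x == inl u) || ((x != inr e) && (x \in c)).
Proof. by rewrite !inE. Qed.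

Lemma expanded_notin : inl u \notin c.
Proof.
apply: contraT => /negbNE uc; move: (De uc isT).
by rewrite (cl_disj_edge _ jpu) !inE eqxx andbF.
Qed.

Lemma expanded_cell : is_cell S n c0.
Proof.
have Du x : x \in c -> x != inr e -> cl_disj S (inl u) x.
  by move=> xc xe; move: (De xc xe); rewrite (cl_disj_edge _ jpu) cl_disj_vertex => /andP[].
case: cell => card_c Dc; split.
  by rewrite cardsU1 !inE negb_and expanded_notin orbT -card_c (cardsD1 (inr e) c) ec.
move=> x y; rewrite !mem_expanded.
move=> /orP[/eqP-> | /andP[xe xc]] /orP[/eqP-> | /andP[ye yc]] xy.
- by rewrite eqxx in xy.
- exact: Du.
- by rewrite cl_disjC; apply: Du.
- exact: Dc.
Qed.

Lemma expanded_unblocked : unblocked S c0 u.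
Proof.
apply/(unblockedP _ pe); split; first by rewrite mem_expanded eqxx.
  exact: child_neq_star pu.
by move=> x; rewrite mem_expanded => /orP[/eqP-> // | /andP[xe xc]] _; apply: De.
Qed.

Lemma expanded_min w : unblocked S c0 w -> vle S u w.
Proof.
move=> Uw; case: (vle_or_vlt HT HL u w) => // lt_wu.
have wu : w != u by apply/eqP => wu; case: lt_wu => _; rewrite wu.
have wc : inl w \in c.
  by case: Uw; rewrite mem_expanded (inj_eq (@inl_inj _ _)) (negbTE wu) => /andP[].
have [_ []] := blocked_below wc lt_wu; case: Uw => _ ws [g [pg Dg]].
apply/(unblockedP _ pg); split=> // x xc xw.
have [-> | xe] := eqVneq x (inr e).
  2: by apply: Dg => //; rewrite mem_expanded xe xc orbT.
have [q jg] := par_edge_joins HT pg.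
have we : w \notin endset S (inr e) by move: (De wc isT); rewrite cl_disjC cl_disj_vertex.
have qu : q != u.
  have /Dg : inl u \in c0 by rewrite mem_expanded eqxx.
  have uw : inl u <> inl w :> V + E by move=> [uw]; rewrite uw eqxx in wu.
  by move=> /(_ uw); rewrite (cl_disj_edge _ jg) !inE => /andP[].
(* if e(w) met e in p, order-respect of e would force u < w *)
have qp : q != p.
  apply/eqP => qp; subst q.
  have ge : g <> e by move=> ge; rewrite -ge (endset_joins jg) !inE eqxx orbT in we.
  have [iota_e tau_e] := child_iota HL pu.
  have [_ _ /(_ w wc ws g pg)] := ore; rewrite iota_e => H.
  apply: (vlt_nvle HT HL lt_wu); apply: proj1 (H _); split=> //.
  apply/setP => z; rewrite (endset_joins jg) (endset_joins jpu) tau_e !inE.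
  by case: (eqVneq z p) => //= _; case: (eqVneq z w) => [-> | _]; rewrite ?(negbTE wu).
by rewrite (cl_disj_edge _ jg) we (endset_joins jpu) !inE negb_or qp qu.
Qed.

Lemma expanded_redundant_cond : redundant_cond c0.
Proof.
have uc0 : inl u \in c0 by rewrite mem_expanded eqxx.
have [[f orf] | nor] := classic (exists f, ord_resp S c0 f); last first.
  by left; split=> //; exists u; split=> //; apply: expanded_unblocked.
have [e0 [ore0 min_e0]] := vle_min HT HL (iotaE S) (ex_intro _ f orf).
right; exists e0; split=> //; exists u; split=> //; first exact: expanded_unblocked.
case: (ore0) => + e0T H0; rewrite mem_expanded /= => /andP[e0e e0c].
have ore0_c : ord_resp S c e0.
  by split=> // v vc; apply: H0; rewrite mem_expanded vc orbT.
split; first exact: min_e.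
move=> u_iota; move: (De e0c e0e); rewrite (cl_disj_edge _ jpu) u_iota.
by rewrite iota_endset andbF.
Qed.

Lemma expanded_princ_red : princ_red S c0 c.
Proof.
exists u; split; [exact: expanded_unblocked | exact: expanded_min |].
split; first exact: expanded_unblocked.
exists e; split=> //; apply/setP => x; rewrite !inE.
have [-> | xe] := eqVneq x (inr e); first by rewrite ec orbT.
have [-> | xu] := eqVneq x (inl u); last by rewrite orbF.
by rewrite (negbTE expanded_notin).
Qed.

Lemma dim_expanded : dim S c = (dim S c0).+1.
Proof.
rewrite /dim (cardsD1 (inr e)) !inE ec /= add1n; congr _.+1; apply: eq_card => x.
rewrite !inE; have [-> // | xe] := eqVneq x (inr e).
by have [-> | xu] := eqVneq x (inl u); rewrite ?andbF.
Qed.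

End Expansion.

Lemma collapsible_cond_expansion n c : is_cell S n c -> collapsible_cond c ->
  exists c0, [/\ is_cell S n c0, redundant_cond c0, princ_red S c0 c &
                 dim S c = (dim S c0).+1].
Proof.
move=> cell [e [[ore min_e] blocked_below]].
have [p [u pu]] : exists p u, root_path HT u = rcons (root_path HT p) (e, u).
  by case: ore => _ eT _; apply: tree_edge_child.
have [iota_e _] := child_iota HL pu; rewrite iota_e in min_e blocked_below.
exists (inl u |: (c :\ inr e)); split.
- exact: expanded_cell cell pu ore.
- exact: expanded_redundant_cond cell pu ore min_e.
- exact: expanded_princ_red cell pu ore blocked_below.
- exact: dim_expanded ore.
Qed.

Lemma princ_red_exists c : (exists c', princ_red S c c') <-> exists v, unblocked S c v.
Proof.
split=> [[c' [v [Uv _ _]]] | ex_unbl]; first by exists v.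
have [v [Uv min_v]] := vle_min HT HL id ex_unbl.
have [_ _ [e [pe _]]] := Uv.
by exists (c :\ inl v :|: [set inr e]), v; split=> //; split=> //; exists e.
Qed.

Lemma redundant_cond_ncollapsible c : redundant_cond c -> ~ collapsible_cond c.
Proof.
case=> [[nor _] | [e0 [[ore0 min_e0] [v [vc Uv lt_v]]]]] [e [[ore min_e] blocked_below]].
  by apply: nor; exists e.
have ee : iotaE S e = iotaE S e0 by apply: (vle_anti HT HL (min_e _ ore0) (min_e0 _ ore)).
by case: (blocked_below v vc); rewrite ?ee.
Qed.

Lemma ord_resp_redundant_or_collapsible c :
  (exists e, ord_resp S c e) -> redundant_cond c \/ collapsible_cond c.
Proof.
move=> ex_or; have [e [ore min_e]] := vle_min HT HL (iotaE S) ex_or.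
have [[v [vc Uv lt_v]] | all_blocked] :=
  classic (exists v, [/\ inl v \in c, unblocked S c v & vlt S v (iotaE S e)]).
  by left; right; exists e; split=> //; exists v.
right; exists e; split=> // v vc lt_v; split=> // Uv.
by apply: all_blocked; exists v.
Qed.

Lemma redundant_condE c :
  redundant_cond c <-> (exists v, unblocked S c v) /\ ~ collapsible_cond c.
Proof.
split=> [R | [[v Uv] nC]].
  split; last exact: redundant_cond_ncollapsible.
  by case: R => [[_ [v [_ Uv]]] | [_ [_ [v [_ Uv _]]]]]; exists v.
have [ex_or | nor] := classic (exists e, ord_resp S c e).
  by case: (ord_resp_redundant_or_collapsible ex_or).
by left; split=> //; exists v; split=> //; case: Uv.
Qed.

Lemma dim0_ncollapsible c : dim S c = 0 -> ~ collapsible_cond c.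
Proof.
move=> /eqP; rewrite cards_eq0 => /eqP c_vert [e [[[ec _ _] _] _]].
have : inr e \in [set x in c | is_inr S x] by rewrite inE ec.
by rewrite c_vert inE.
Qed.

Lemma domW_iff n i c : is_cell S n c -> domW S n i c <-> dim S c = i /\ redundant_cond c.
Proof.
elim: i c => [|i IH] c cell /=; split.
- case=> d0 /princ_red_exists ex_unbl _; split=> //.
  by apply/redundant_condE; split=> //; apply: dim0_ncollapsible.
- by case=> d0 /redundant_condE[ex_unbl _]; split=> //; apply/princ_red_exists.
- case=> di /princ_red_exists ex_unbl nim; split=> //; apply/redundant_condE; split=> // C.
  have [c0 [cell0 R0 red0 dim_c]] := collapsible_cond_expansion cell C.
  apply: nim; exists c0; split=> //; apply/(IH _ cell0); split=> //.
  by move: dim_c; rewrite di => -[].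
- case=> di /redundant_condE[ex_unbl nC]; split=> //; first exact/princ_red_exists.
  case=> c0 [cell0 /(IH _ cell0)[_ R0] red0].
  exact: nC (princ_red_collapsible_cond cell0 R0 red0).
Qed.

Lemma redundantE n c : is_cell S n c -> redundant S n c <-> redundant_cond c.
Proof. by move=> cell; split=> [/(domW_iff _ cell)[] | R]; last apply/(domW_iff _ cell). Qed.

Lemma collapsibleE n c : is_cell S n c -> collapsible S n c <-> collapsible_cond c.
Proof.
move=> cell; split=> [[c0 [cell0 /(redundantE cell0) R0 red0]] | C].
  exact: princ_red_collapsible_cond cell0 R0 red0.
have [c0 [cell0 R0 red0 _]] := collapsible_cond_expansion cell C.
by exists c0; split=> //; apply/(redundantE cell0).
Qed.

End Cells.

Theorem mainTheorem7 (S : gsetup) (n : nat) (c : {set (gV S + gE S)}) :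
  valid S -> 1 <= n -> is_cell S n c ->
  [/\ critical S n c <->
        (~ (exists e, ord_resp S c e) /\
         forall v, inl v \in c -> blocked S c v),
      redundant S n c <->
        ((~ (exists e, ord_resp S c e) /\
          exists v, inl v \in c /\ unblocked S c v) \/
         (exists e, min_ord_resp S c e /\
            exists v, [/\ inl v \in c, unblocked S c v & vlt S v (iotaE S e)]))
    & collapsible S n c <->
        (exists e, min_ord_resp S c e /\
           forall v, inl v \in c -> vlt S v (iotaE S e) -> blocked S c v)].
Proof.
case=> _ HT _ HL _ cell.
have RE := redundantE HT HL cell; have CE := collapsibleE HT HL cell.
split=> //; split=> [[/RE nR /CE nC] | [nor all_blocked]].
  have nor : ~ exists e, ord_resp S c e.
    by move/(ord_resp_redundant_or_collapsible HT HL) => -[].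
  by split=> // v vc; split=> // Uv; apply: nR; left; split=> //; exists v.
split=> [/RE [[_ [v [vc Uv]]] | [e [[ore _] _]]] | /CE [e [[ore _] _]]].
- by case: (all_blocked v vc).
- by apply: nor; exists e.
- by apply: nor; exists e.
Qed.
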